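(* Let $\mathcal{D}_R$ be the class of all finite reflexive digraphs and let $D\in\mathcal{D}_R$. The class $\mathrm{Av}(D)=\{E\in\mathcal{D}_R: D\not\preceq E\}$, with respect to the strong homomorphic image ordering $\preceq$, is well quasi-ordered if and only if $D$ is isomorphic to the complete digraph $\overrightarrow{K}_n$ for some $n\ge1$.
   Context: A digraph is a set $D$ with a binary relation $E(D)\subseteq D\times D$; reflexive means every loop $(x,x)$ is an edge. $\overrightarrow{K}_n$ is the digraph on $\{1,\dots,n\}$ with edge set $\{(i,j):1\le i,j\le n\}$. A homomorphism maps edges to edges; it is strong if additionally every edge of the target between vertices of the image is the image of an edge. Strong homomorphic image ordering: $A\preceq B$ iff there is a surjective strong homomorphism $B\to A$. Well quasi-ordered means no infinite strictly decreasing sequence and no infinite antichain; digraphs considered up to isomorphism. *)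

From mathcomp Require Import all_boot.
Set Implicit Arguments. Unset Strict Implicit. Unset Printing Implicit Defensive.

Record fdigraph := FDigraph { fd_n : nat; fd_E : rel 'I_fd_n }.
Arguments fd_E : clear implicits.

Definition reflexive_dg (D : fdigraph) : Prop := forall x, fd_E D x x.

Definition Kn (n : nat) : fdigraph := @FDigraph n (fun _ _ => true).

Definition dg_hom (B A : fdigraph) (f : 'I_(fd_n B) -> 'I_(fd_n A)) : Prop :=
  forall x y, fd_E B x y -> fd_E A (f x) (f y).

Definition dg_strong_hom (B A : fdigraph) (f : 'I_(fd_n B) -> 'I_(fd_n A)) : Prop :=
  @dg_hom B A f /\
  forall x y, fd_E A (f x) (f y) ->
    exists x' y', [/\ f x' = f x, f y' = f y & fd_E B x' y'].

Definition dg_surj (B A : fdigraph) (f : 'I_(fd_n B) -> 'I_(fd_n A)) : Prop :=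
  forall a, exists b, f b = a.

Definition shi_le (A B : fdigraph) : Prop :=
  exists f : 'I_(fd_n B) -> 'I_(fd_n A), @dg_strong_hom B A f /\ @dg_surj B A f.

Definition shi_lt (A B : fdigraph) : Prop := shi_le A B /\ ~ shi_le B A.

Definition dg_iso (A B : fdigraph) : Prop :=
  exists f : 'I_(fd_n A) -> 'I_(fd_n B), bijective f /\
    forall x y, fd_E A x y = fd_E B (f x) (f y).

Definition wqo_shi (C : fdigraph -> Prop) : Prop :=
  (~ exists s : nat -> fdigraph,
       (forall i, C (s i)) /\ forall i, shi_lt (s i.+1) (s i)) /\
  (~ exists s : nat -> fdigraph,
       (forall i, C (s i)) /\ forall i j, i <> j -> ~ shi_le (s i) (s j)).

Definition Av (D : fdigraph) (E : fdigraph) : Prop :=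
  reflexive_dg E /\ ~ shi_le D E.

(* If D is not complete, the complete digraphs on 2m vertices with a perfect
   matching removed (both arcs of each matching pair if D is not symmetric, one
   arc otherwise) lie in Av(D), and they form an antichain: every vertex lies on
   exactly one missing arc, which forces a surjective homomorphism between two of
   them to be injective.

   Conversely, let D = K_n. A strict strong homomorphic image has fewer
   vertices, so there is no infinite descending chain. If K_n is not an image of
   the reflexive digraph E, then E has no matching of n^2 arcs (it would map onto
   K_n, loops included), so the endpoints of a maximal matching form a vertex
   cover C with |C| <= 2n^2. Labelling each vertex by its position in C and its
   in- and out-neighbourhoods in C splits E into independent classes between
   which arcs only depend on the labels. Hence E is determined by the set of
   label pairs joined by an arc and the sizes of the classes, and a digraph with
   the same label pairs and larger classes maps onto E. Dickson's lemma on these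
   profiles rules out infinite antichains. *)

From mathcomp Require Import all_boot.
From Stdlib Require Import Classical ClassicalEpsilon.
Set Implicit Arguments. Unset Strict Implicit. Unset Printing Implicit Defensive.

(** * Strong homomorphic images *)

Lemma surj_leq_card_image (T T' : finType) (f : T -> T') :
  (forall y, exists x, f x = y) -> #|T'| <= #|image f T|.
Proof.
move=> surj_f; apply/subset_leq_card/subsetP => y _.
by have [x <-] := surj_f y; apply: codom_f.
Qed.

Lemma surj_leq_card (T T' : finType) (f : T -> T') :
  (forall y, exists x, f x = y) -> #|T'| <= #|T|.
Proof. by move/surj_leq_card_image/leq_trans; apply; apply: leq_image_card. Qed.

Lemma surj_card_inj (T T' : finType) (f : T -> T') :
  (forall y, exists x, f x = y) -> #|T| <= #|T'| -> injective f.
Proof.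
move=> surj_f le_card; have /image_injP inj_f : #|image f T| == #|T|.
  by rewrite eqn_leq leq_image_card (leq_trans le_card) ?surj_leq_card_image.
by move=> x y; apply: inj_f.
Qed.

Lemma shi_le_card A B : shi_le A B -> fd_n A <= fd_n B.
Proof. by case=> f [_ /surj_leq_card]; rewrite !card_ord. Qed.

Lemma shi_le_trans A B C : shi_le A B -> shi_le B C -> shi_le A C.
Proof.
case=> f [[hom_f strong_f] surj_f] [g [[hom_g strong_g] surj_g]].
exists (f \o g); split; [split|] => /=.
- by move=> x y /hom_g /hom_f.
- move=> x y /strong_f [a [b [fa fb Eab]]].
  have [x1 ex1] := surj_g a; have [y1 ey1] := surj_g b.
  rewrite -ex1 -ey1 in Eab; have [x' [y' [gx gy Exy]]] := strong_g _ _ Eab.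
  by exists x', y'; split; rewrite /= ?gx ?gy ?ex1 ?ey1.
- by move=> a; have [b <-] := surj_f a; have [c <-] := surj_g b; exists c.
Qed.

Lemma dg_iso_shi_le A B : dg_iso A B -> shi_le A B.
Proof.
case=> f [[g fK gK] Ef]; exists g; split; [split|].
- by move=> x y; rewrite Ef !gK.
- by move=> x y; rewrite Ef !gK => Exy; exists x, y.
- by move=> x; exists (f x); rewrite fK.
Qed.

Lemma bij_strong_hom_iso B A (f : 'I_(fd_n B) -> 'I_(fd_n A)) :
  dg_strong_hom f -> bijective f -> dg_iso B A.
Proof.
move=> [hom_f strong_f] bij_f; exists f; split=> // x y.
apply/idP/idP => [/hom_f // | /strong_f [x' [y' [fx fy]]]].
by rewrite (bij_inj bij_f fx) (bij_inj bij_f fy).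
Qed.

Lemma shi_lt_card A B : shi_lt A B -> fd_n A < fd_n B.
Proof.
case=> le_AB not_le_BA; rewrite ltn_neqAle shi_le_card // andbT.
apply: contra_notN not_le_BA => /eqP eq_n.
have [f [strong_f surj_f]] := le_AB.
apply/dg_iso_shi_le/(bij_strong_hom_iso strong_f)/inj_card_bij.
  by apply: surj_card_inj surj_f _; rewrite !card_ord eq_n.
by rewrite !card_ord eq_n.
Qed.

Lemma no_shi_descending_chain (s : nat -> fdigraph) :
  ~ (forall i, shi_lt (s i.+1) (s i)).
Proof.
move=> desc; have size_le i : fd_n (s i) + i <= fd_n (s 0).
  elim: i => [|i IH]; first by rewrite addn0.
  by apply: leq_trans IH; rewrite addnS ltn_add2r shi_lt_card.
by have := size_le (fd_n (s 0)).+1; rewrite addnS ltnNge leq_addl.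
Qed.

Definition dg_symmetric (D : fdigraph) : bool :=
  [forall x, forall y, fd_E D x y ==> fd_E D y x].

Lemma dg_symmetricP D :
  reflect (forall x y, fd_E D x y -> fd_E D y x) (dg_symmetric D).
Proof.
apply: (iffP forallP) => [sym x y | sym x]; first exact/implyP/(forallP (sym x)).
by apply/forallP => y; apply/implyP/sym.
Qed.

Lemma shi_le_symmetric A B : shi_le A B -> dg_symmetric B -> dg_symmetric A.
Proof.
case=> f [[hom_f strong_f] surj_f] /dg_symmetricP symB; apply/dg_symmetricP => a b.
have [x <-] := surj_f a; have [y <-] := surj_f b.
by case/strong_f => x' [y' [<- <- /symB /hom_f]].
Qed.

Lemma complete_dg_iso_Kn D : (forall x y, fd_E D x y) -> dg_iso D (Kn (fd_n D)).
Proof. by move=> full; exists id; split; [exists id | move=> x y; rewrite full]. Qed.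

Lemma nonedge_of_not_Kn D : 0 < fd_n D ->
  ~ (exists n, 0 < n /\ dg_iso D (Kn n)) -> exists a c, ~~ fd_E D a c.
Proof.
move=> D_gt0 not_Kn; apply: NNPP => complete; apply: not_Kn.
exists (fd_n D); split=> //; apply: complete_dg_iso_Kn => a c.
by apply: NNPP => n_ac; apply: complete; exists a, c; apply/negP.
Qed.

Lemma hom_nonedge B A (f : 'I_(fd_n B) -> 'I_(fd_n A)) x y :
  dg_hom f -> ~~ fd_E A (f x) (f y) -> ~~ fd_E B x y.
Proof. by move=> hom_f; apply: contra; apply: hom_f. Qed.

(** * An infinite antichain in Av(D) for D not complete *)

Lemma half_odd_inj (a b : nat) : a./2 = b./2 -> odd a = odd b -> a = b.
Proof. by move=> h o; rewrite -[a]odd_double_half -[b]odd_double_half h o. Qed.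

(* The complete digraph on [2m] vertices minus a perfect matching
   [{2k, 2k+1}]: both arcs of each matching edge are removed when [sym],
   only the arc [2k -> 2k+1] otherwise. *)
Definition Kminus_matching (sym : bool) (m : nat) : fdigraph :=
  @FDigraph m.*2 (fun u v => (u == v) || (u./2 != v./2) || ~~ sym && odd u).

Section KminusMatching.
Variables (sym : bool) (m : nat).
Local Notation G := (Kminus_matching sym m).
Implicit Types u v : 'I_m.*2.

Lemma Kminus_matching_refl : reflexive_dg G.
Proof. by move=> u /=; rewrite eqxx. Qed.

Lemma Kminus_matching_nonedge u v : ~~ fd_E G u v ->
  [/\ u./2 = v./2, odd v = ~~ odd u & sym || ~~ odd u].
Proof.
rewrite /= !negb_or negbK -val_eqE => /andP [/andP [ne_uv /eqP half_uv] sym_u].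
split=> //; last by case: sym sym_u; case: (odd u).
have : odd u != odd v by apply: contraNneq ne_uv => /(half_odd_inj half_uv)/eqP.
by case: (odd u); case: (odd v).
Qed.

Lemma Kminus_matching_nonedge_uniql u u' v :
  ~~ fd_E G u v -> ~~ fd_E G u' v -> u' = u.
Proof.
move=> /Kminus_matching_nonedge [h o _] /Kminus_matching_nonedge [h' o' _].
by apply/val_inj/half_odd_inj; rewrite ?h ?h' // -[odd u]negbK -o o' negbK.
Qed.

Lemma Kminus_matching_nonedge_uniqr u v v' :
  ~~ fd_E G u v -> ~~ fd_E G u v' -> v' = v.
Proof.
move=> /Kminus_matching_nonedge [h o _] /Kminus_matching_nonedge [h' o' _].
by apply/val_inj/half_odd_inj; rewrite -?h -?h' // o o'.
Qed.

Lemma Kminus_matching_partner v : exists u, ~~ fd_E G u v || ~~ fd_E G v u.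
Proof.
have lt_u : ~~ odd v + (v./2).*2 < m.*2.
  by rewrite -ltn_half_double half_bit_double ltn_half_double.
exists (Ordinal lt_u); rewrite /= -!val_eqE /= half_bit_double eqxx /=.
rewrite oddD odd_double addbF; have := odd_double_half v; set n := v./2.
by case: (odd v) => <-; rewrite !eqn_add2r /= andbF ?orbT.
Qed.

Lemma Kminus_matching_symmetric : sym -> dg_symmetric G.
Proof.
move=> sym_G; apply/dg_symmetricP => u v.
by rewrite /= sym_G /= !orbF eq_sym [_./2 == _]eq_sym.
Qed.

Lemma Kminus_matching_oneway u v : ~~ sym -> ~~ fd_E G u v -> fd_E G v u.
Proof.
move=> /negbTE asym /Kminus_matching_nonedge [_ odd_v sym_u].
apply: contraT => /Kminus_matching_nonedge [_ _ sym_v].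
by move: sym_u sym_v; rewrite odd_v asym; case: (odd u).
Qed.

End KminusMatching.

Lemma Kminus_matching_hom_inj sym m m'
    (f : 'I_(fd_n (Kminus_matching sym m')) -> 'I_(fd_n (Kminus_matching sym m))) :
  dg_hom f -> dg_surj f -> injective f.
Proof.
move=> hom_f surj_f x x' fx.
have [u] := Kminus_matching_partner sym (f x); have [z <-] := surj_f u.
case/orP => nonedge.
- have n_zx' : ~~ fd_E _ z x' by apply: hom_nonedge hom_f _; rewrite -fx.
  exact: Kminus_matching_nonedge_uniqr n_zx' (hom_nonedge hom_f nonedge).
- have n_x'z : ~~ fd_E _ x' z by apply: hom_nonedge hom_f _; rewrite -fx.
  exact: Kminus_matching_nonedge_uniql n_x'z (hom_nonedge hom_f nonedge).
Qed.

Lemma Kminus_matching_antichain sym i j :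
  i != j -> ~ shi_le (Kminus_matching sym i) (Kminus_matching sym j).
Proof.
move=> ne_ij le_ij; have /= := shi_le_card le_ij.
rewrite leq_double leq_eqVlt (negbTE ne_ij) /= => lt_ij.
have [f [[hom_f _] surj_f]] := le_ij.
have := @inj_leq _ _ f (Kminus_matching_hom_inj hom_f surj_f).
by rewrite /= leq_double leqNgt lt_ij.
Qed.

Lemma Kminus_matching_avoid D m :
  ~ (exists n, 0 < n /\ dg_iso D (Kn n)) ->
  ~ shi_le D (Kminus_matching (~~ dg_symmetric D) m.+1).
Proof.
move=> not_Kn le_DG; have [f [[hom_f strong_f] surj_f]] := le_DG.
have x0 : 'I_(m.+1).*2 by exists 0; rewrite double_gt0.
have [a [c n_ac]] := nonedge_of_not_Kn (leq_ltn_trans (leq0n _) (ltn_ord (f x0))) not_Kn.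
have [symD | asymD] := boolP (dg_symmetric D); last first.
  have := shi_le_symmetric le_DG (Kminus_matching_symmetric _ asymD).
  by rewrite (negbTE asymD).
have n_ca : ~~ fd_E D c a by apply: contra n_ac; apply: (dg_symmetricP _ symD).
have [x ex] := surj_f a; have [y ey] := surj_f c.
rewrite -ex -ey in n_ac n_ca.
have n_yx := hom_nonedge hom_f n_ca.
by rewrite (Kminus_matching_oneway _ (hom_nonedge hom_f n_ac)) ?symD in n_yx.
Qed.

(** * Dickson's lemma *)

(* A strengthening of the absence of bad sequences that, unlike it, is
   preserved under meets of relations. *)
Definition chain_extractable (T : Type) (R : rel T) :=
  forall s : nat -> T, exists2 t : nat -> nat,
    {homo t : i j / i < j} & {homo s \o t : i j / i < j >-> R i j}.

Lemma chain_extractable_good_pair (T : Type) (R : rel T) (s : nat -> T) :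
  chain_extractable R -> exists i j, i < j /\ R (s i) (s j).
Proof.
move=> /(_ s) [t mono_t chain_t]; exists (t 0), (t 1).
by split; [apply: mono_t | apply: (chain_t 0 1)].
Qed.

Lemma sub_chain_extractable (T : Type) (R R' : rel T) :
  subrel R R' -> chain_extractable R -> chain_extractable R'.
Proof.
move=> sub_R ce_R s; have [t mono_t chain_t] := ce_R s.
by exists t => // i j /chain_t /sub_R.
Qed.

Lemma chain_extractable_comap (T T' : Type) (f : T -> T') (R : rel T') :
  chain_extractable R -> chain_extractable (fun x y => R (f x) (f y)).
Proof. by move=> ce_R s; have [t mono_t chain_t] := ce_R (f \o s); exists t. Qed.

Lemma chain_extractable_meet (T : Type) (R1 R2 : rel T) :
  chain_extractable R1 -> chain_extractable R2 ->
  chain_extractable (fun x y => R1 x y && R2 x y).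
Proof.
move=> ce1 ce2 s; have [t1 mono1 chain1] := ce1 s.
have [t2 mono2 chain2] := ce2 (s \o t1).
by exists (t1 \o t2) => i j lt_ij /=; rewrite ?chain1 ?chain2 ?mono1 ?mono2.
Qed.

Lemma exists_min_from (a : nat -> nat) N :
  exists j, N <= j /\ forall j', N <= j' -> a j <= a j'.
Proof.
suff: forall v j, N <= j -> a j <= v ->
    exists j, N <= j /\ forall j', N <= j' -> a j <= a j'.
  by apply; first exact: leqnn.
elim=> [|v IH] j le_Nj le_jv.
  by exists j; split => // j' _; move: le_jv; rewrite leqn0 => /eqP ->.
have [[j' [le_Nj' lt_j'j]] | no_smaller] :=
  classic (exists j', N <= j' /\ a j' < a j).
  by apply: (IH j') => //; rewrite -ltnS (leq_trans lt_j'j).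
exists j; split => // j' le_Nj'; rewrite leqNgt; apply/negP => lt_j'j.
by apply: no_smaller; exists j'.
Qed.

Lemma chain_extractable_leq : chain_extractable leq.
Proof.
move=> a.
pose m N := proj1_sig (constructive_indefinite_description _ (exists_min_from a N)).
have m_spec N : N <= m N /\ forall j, N <= j -> a (m N) <= a j.
  exact: proj2_sig (constructive_indefinite_description _ (exists_min_from a N)).
pose t i := m (iter i (fun N => (m N).+1) 0).
have t_lt i : t i < t i.+1 by rewrite /t iterS (m_spec _).1.
have t_min i j : t i <= j -> a (t i) <= a j.
  by move=> le_tj; apply: (m_spec _).2; apply: leq_trans (m_spec _).1 le_tj.
exists t; first by apply: homo_ltn t_lt => y x z; apply: ltn_trans.
by apply: homo_ltn => [y x z|i]; [apply: leq_trans | apply/t_min/ltnW].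
Qed.

(* Equality on a finite type is the meet of the order of ranks and its reverse. *)
Lemma chain_extractable_eq (F : finType) : chain_extractable (@eq_op F).
Proof.
have := chain_extractable_meet
  (chain_extractable_comap (fun x : F => val (enum_rank x)) chain_extractable_leq)
  (chain_extractable_comap (fun x : F => val (rev_ord (enum_rank x))) chain_extractable_leq).
apply: sub_chain_extractable => x y /andP [le_xy]; rewrite /= leq_sub2lE //.
by move=> le_yx; apply/eqP/enum_rank_inj/val_inj/eqP; rewrite eqn_leq le_xy.
Qed.

Lemma chain_extractable_ptwise_leq (K : finType) :
  chain_extractable (fun f g : K -> nat => [forall k, f k <= g k]).
Proof.
suff ce_all (ks : seq K) :
    chain_extractable (fun f g : K -> nat => all (fun k => f k <= g k) ks).
  apply: sub_chain_extractable (ce_all (enum K)) => f g /allP le_fg.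
  by apply/forallP => k; apply: le_fg; rewrite mem_enum.
elim: ks => [|k ks IH]; first by move=> s; exists id.
have := chain_extractable_meet
  (chain_extractable_comap (fun f : K -> nat => f k) chain_extractable_leq) IH.
by apply: sub_chain_extractable.
Qed.

Definition profile_le (F K : finType) (p q : F * (K -> nat)) : bool :=
  (p.1 == q.1) && [forall k, p.2 k <= q.2 k].

Lemma chain_extractable_profile_le (F K : finType) : chain_extractable (@profile_le F K).
Proof.
have := chain_extractable_meet (chain_extractable_comap fst (@chain_extractable_eq F))
  (chain_extractable_comap snd (@chain_extractable_ptwise_leq K)).
by apply: sub_chain_extractable.
Qed.

Lemma fiberwise_surjection (TA TB K : finType) (lA : TA -> K) (lB : TB -> K) :
  (forall y, exists x, lA x = lB y) ->
  (forall k, #|[pred x | lA x == k]| <= #|[pred y | lB y == k]|) ->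
  exists2 g : TB -> TA, (forall y, lA (g y) = lB y) & (forall x, exists y, g y = x).
Proof.
move=> lB_in_lA le_fibers.
pose fibA k := enum [pred x | lA x == k]; pose fibB k := enum [pred y | lB y == k].
have mem_fibA x k : (x \in fibA k) = (lA x == k) by rewrite mem_enum.
have mem_fibB y k : (y \in fibB k) = (lB y == k) by rewrite mem_enum.
have fiber_elt y : exists x, lA x == lB y by have [x <-] := lB_in_lA y; exists x.
pose g y := nth (xchoose (fiber_elt y)) (fibA (lB y)) (index y (fibB (lB y))).
exists g => [y | x].
  rewrite /g; have [lt | ge] := ltnP (index y (fibB (lB y))) (size (fibA (lB y))).
    by apply/eqP; rewrite -mem_fibA mem_nth.
  by rewrite nth_default //; apply/eqP/(xchooseP (fiber_elt y)).
have lt_x : index x (fibA (lA x)) < size (fibB (lA x)).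
  by rewrite /fibB -cardE (leq_trans _ (le_fibers _)) // cardE index_mem mem_fibA.
have /hasP [y0 _ _] : has predT (fibB (lA x)) by rewrite has_predT (leq_ltn_trans _ lt_x).
pose y := nth y0 (fibB (lA x)) (index x (fibA (lA x))).
have /eqP ly : lB y == lA x by rewrite -mem_fibB mem_nth.
have idx_y : index y (fibB (lA x)) = index x (fibA (lA x)).
  by rewrite index_uniq ?enum_uniq.
exists y; rewrite /g (set_nth_default x) ly idx_y ?nth_index ?index_mem ?mem_fibA //.
Qed.

Section Labelling.
Variables (K : finType) (E : fdigraph).
Implicit Type l : 'I_(fd_n E) -> K.

Definition label_twin l := forall a a' b b',
  l a = l a' -> l b = l b' -> l a != l b -> fd_E E a b = fd_E E a' b'.

Definition label_indep l := forall a b, l a = l b -> a != b -> ~~ fd_E E a b.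

Definition label_arcs l : {set K * K} :=
  [set (l e.1, l e.2) | e in [pred e | fd_E E e.1 e.2]].

Definition label_count l (k : K) : nat := #|[pred x | l x == k]|.

Definition label_profile l := (label_arcs l, label_count l).

Lemma label_arcs_edge l x y : fd_E E x y -> (l x, l y) \in label_arcs l.
Proof. by move=> Exy; apply/imsetP; exists (x, y). Qed.

Lemma label_twin_arcE l a b : label_twin l -> l a != l b ->
  fd_E E a b = ((l a, l b) \in label_arcs l).
Proof.
move=> twin_l ne_ab; apply/idP/imsetP => [Eab | [e Ee [ea eb]]]; first by exists (a, b).
by rewrite (twin_l _ e.1 _ e.2).
Qed.

End Labelling.

Lemma shi_le_of_profile (K : finType) (A B : fdigraph)
    (lA : 'I_(fd_n A) -> K) (lB : 'I_(fd_n B) -> K) :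
  reflexive_dg A -> reflexive_dg B ->
  label_twin lA -> label_indep lA -> label_twin lB -> label_indep lB ->
  profile_le (label_profile lA) (label_profile lB) -> shi_le A B.
Proof.
move=> reflA reflB twinA indepA twinB indepB /andP [/eqP /= arcsE /forallP le_count].
have [g lg surj_g] : exists2 g : 'I_(fd_n B) -> 'I_(fd_n A),
    (forall y, lA (g y) = lB y) & (forall x, exists y, g y = x).
  apply: fiberwise_surjection le_count => y.
  (* each label of [lB] labels a loop, hence also an arc of [A] *)
  have := label_arcs_edge lB (reflB y); rewrite -arcsE => /imsetP [e _ [e1 _]].
  by exists e.1.
have arcE x y : g x != g y -> fd_E B x y = fd_E A (g x) (g y).
  move=> ne_g; have [eq_l | ne_l] := eqVneq (lB x) (lB y).
    rewrite (negbTE (indepB _ _ eq_l _)); last by apply: contraNneq ne_g => ->.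
    by rewrite (negbTE (indepA _ _ _ ne_g)) // !lg.
  have ne_lA : lA (g x) != lA (g y) by rewrite !lg.
  by rewrite (label_twin_arcE twinB ne_l) (label_twin_arcE twinA ne_lA) !lg arcsE.
exists g; split; [split|] => // x y.
  by have [-> _ | ne_g] := eqVneq (g x) (g y); [apply: reflA | rewrite -arcE].
have [eq_g _ | ne_g] := eqVneq (g x) (g y); first by exists x, x; split; rewrite // reflB.
by rewrite -arcE // => Exy; exists x, y.
Qed.

(** * Matchings and vertex covers *)

Section Matching.
Variable E : fdigraph.
Local Notation V := 'I_(fd_n E).
Implicit Types (S : {set V * V}) (e : V * V).

Definition matching S : bool :=
  [forall e in S, (e.1 != e.2) && fd_E E e.1 e.2] &&
  [forall e in S, forall e' in S, forall x,
     (x \in [:: e.1; e.2]) ==> (x \in [:: e'.1; e'.2]) ==> (e == e')].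

Definition matched S : {set V} := [set x | [exists e in S, x \in [:: e.1; e.2]]].

Lemma matching_arc S e : matching S -> e \in S -> e.1 != e.2 /\ fd_E E e.1 e.2.
Proof. by case/andP => /forall_inP arcs _ /arcs /andP. Qed.

Lemma matching_meet S e e' x : matching S -> e \in S -> e' \in S ->
  x \in [:: e.1; e.2] -> x \in [:: e'.1; e'.2] -> e = e'.
Proof.
case/andP => _ /forall_inP disj eS e'S xe xe'.
by apply/eqP; move/forall_inP/(_ e' e'S)/forallP/(_ x): (disj e eS); rewrite xe xe'.
Qed.

Lemma matching0 : matching set0.
Proof. by apply/andP; split; apply/forall_inP => e; rewrite inE. Qed.

Lemma card_matched S : #|matched S| <= #|S|.*2.
Proof.
have sub : matched S \subset (fst @: S) :|: (snd @: S).
  apply/subsetP => x; rewrite inE => /exists_inP [e eS].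
  by rewrite mem_seq2 => /orP [] /eqP ->; rewrite in_setU imset_f ?orbT.
apply: leq_trans (subset_leq_card sub) _; apply: leq_trans (leq_card_setU _ _) _.
by rewrite -addnn leq_add ?leq_imset_card.
Qed.

Lemma matching_add S x y : matching S -> x != y -> fd_E E x y ->
  x \notin matched S -> y \notin matched S -> matching ((x, y) |: S).
Proof.
move=> mS ne_xy Exy xS yS.
have in_matched e z : e \in S -> z \in [:: e.1; e.2] -> z \in matched S.
  by move=> eS ze; rewrite inE; apply/exists_inP; exists e.
have unmatched z : z \in [:: x; y] -> z \notin matched S.
  by rewrite mem_seq2 => /orP [] /eqP ->.
apply/andP; split.
  apply/forall_inP => e; rewrite in_setU1 => /orP [/eqP -> | eS]; first by rewrite /= ne_xy.
  by apply/andP; apply: matching_arc eS.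
apply/forall_inP => e eS'; apply/forall_inP => e' e'S'; apply/forallP => z.
apply/implyP => ze; apply/implyP => ze'.
move: eS' e'S'; rewrite !in_setU1 => /orP [/eqP eE | eS] /orP [/eqP e'E | e'S].
- by rewrite eE e'E.
- by rewrite eE in ze; case/negP: (unmatched z ze); apply: in_matched e'S ze'.
- by rewrite e'E in ze'; case/negP: (unmatched z ze'); apply: in_matched eS ze.
- by rewrite (matching_meet mS eS e'S ze ze').
Qed.

Lemma maximal_matching_cover S : matching S ->
  (forall S', matching S' -> #|S'| <= #|S|) ->
  forall x y, x != y -> fd_E E x y -> (x \in matched S) || (y \in matched S).
Proof.
move=> mS maxS x y ne_xy Exy; apply: contraT; rewrite negb_or => /andP [xS yS].
have xyS : (x, y) \notin S.
  by apply: contra xS => xyS; rewrite inE; apply/exists_inP; exists (x, y); rewrite ?inE ?eqxx.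
by have := maxS _ (matching_add mS ne_xy Exy xS yS); rewrite cardsU1 xyS ltnn.
Qed.

Lemma matching_pick S e x : matching S -> e \in S -> x \in [:: e.1; e.2] ->
  [pick e' in S | x \in [:: e'.1; e'.2]] = Some e.
Proof.
move=> mS eS xe; case: pickP => [e' /andP [e'S xe'] | none].
  by rewrite (matching_meet mS e'S eS xe' xe).
by have := none e; rewrite eS xe.
Qed.

Lemma Kn_shi_le_matching n S : 0 < n -> matching S -> n * n <= #|S| -> shi_le (Kn n) E.
Proof.
move=> n_gt0 mS le_nS; pose i0 := Ordinal n_gt0.
have [e0 e0S] : exists e0, e0 \in S by apply/card_gt0P; rewrite (leq_trans _ le_nS) ?muln_gt0 ?n_gt0.
(* the k-th arc of S is sent onto the k-th pair of vertices of K_n *)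
pose pairs := enum {: 'I_n * 'I_n}.
pose target e := nth (i0, i0) pairs (index e (enum S)).
pose f x := if [pick e in S | x \in [:: e.1; e.2]] is Some e
            then (if x == e.1 then (target e).1 else (target e).2) else i0.
have f_arc e : e \in S -> f e.1 = (target e).1 /\ f e.2 = (target e).2.
  move=> eS; have [ne12 _] := matching_arc mS eS.
  by rewrite /f !(matching_pick mS eS) ?inE ?eqxx ?orbT // eq_sym (negbTE ne12).
have target_onto p : exists2 e, e \in S & target e = p.
  have lt_p : index p pairs < size (enum S).
    have size_pairs : size pairs = n * n by rewrite -cardE card_prod !card_ord.
    by rewrite -cardE (leq_trans _ le_nS) // -size_pairs index_mem mem_enum.
  exists (nth e0 (enum S) (index p pairs)); first by rewrite -mem_enum mem_nth.
  by rewrite /target index_uniq ?enum_uniq // nth_index ?mem_enum.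
exists f; split; [split|] => // [x y _ | i].
  have [e eS te] := target_onto (f x, f y); have [f1 f2] := f_arc e eS.
  by exists e.1, e.2; rewrite f1 f2 te; split => //; case: (matching_arc mS eS).
by have [e eS te] := target_onto (i, i); have [f1 _] := f_arc e eS; exists e.1; rewrite f1 te.
Qed.

End Matching.

Lemma Kn_free_cover E n : 0 < n -> ~ shi_le (Kn n) E ->
  exists C : {set 'I_(fd_n E)}, #|C| <= (n * n).*2 /\
    forall x y, x != y -> fd_E E x y -> (x \in C) || (y \in C).
Proof.
move=> n_gt0 Kn_free.
have [S mS maxS] := arg_maxnP (fun S : {set _ * _} => #|S|) (matching0 E).
exists (matched S); split; last exact: maximal_matching_cover.
apply: leq_trans (card_matched _) _; rewrite leq_double ltnW // ltnNge.
by apply/negP => le_nS; apply: Kn_free; apply: Kn_shi_le_matching le_nS.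
Qed.

(** * Labelling by a vertex cover *)

Lemma set_code_of_card (T : finType) (C : {set T}) c : #|C| <= c ->
  exists pos : T -> option 'I_c, (forall x, (pos x != None) = (x \in C)) /\
    forall x y p, pos x = Some p -> pos y = Some p -> x = y.
Proof.
move=> le_Cc; pose pos x : option 'I_c := if x \in C then insub (index x (enum C)) else None.
have pos_val x p : pos x = Some p -> x \in C /\ val p = index x (enum C).
  by rewrite /pos; case: ifP => // xC; case: insubP => // q _ vq [<-].
exists pos; split => [x | x y p /pos_val [xC px] /pos_val [yC py]]; last first.
  by apply: (@index_inj _ x (enum C)); rewrite ?mem_enum //= -px py.
rewrite /pos; case: ifP => // xC; rewrite insubT //.
by rewrite (leq_trans _ le_Cc) // cardE index_mem mem_enum.
Qed.

Definition cover_label_type c := (option 'I_c * ({set 'I_c} * {set 'I_c}))%type.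

Section CoverLabel.
Variables (E : fdigraph) (c : nat) (pos : 'I_(fd_n E) -> option 'I_c).
Hypothesis pos_inj : forall x y p, pos x = Some p -> pos y = Some p -> x = y.
Hypothesis pos_cover :
  forall x y, x != y -> fd_E E x y -> (pos x != None) || (pos y != None).

(* Outside the cover a vertex only has arcs to and from cover vertices, so its
   neighbourhoods in the cover determine all of its arcs. *)
Definition cover_label x : cover_label_type c :=
  (pos x, ([set p | [exists z, (pos z == Some p) && fd_E E z x]],
           [set p | [exists z, (pos z == Some p) && fd_E E x z]])).

Definition label_arc (k k' : cover_label_type c) : bool :=
  if k'.1 is Some q then q \in k.2.2 else if k.1 is Some p then p \in k'.2.1 else false.

Lemma cover_label_arcE x y :
  x != y -> fd_E E x y = label_arc (cover_label x) (cover_label y).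
Proof.
move=> ne_xy; rewrite /label_arc /=; case py: (pos y) => [q|].
  rewrite inE; apply/idP/existsP => [Exy | [z /andP [/eqP pz]]].
    by exists y; rewrite py eqxx.
  by rewrite (pos_inj pz py).
case px: (pos x) => [p|].
  rewrite inE; apply/idP/existsP => [Exy | [z /andP [/eqP pz]]].
    by exists x; rewrite px eqxx.
  by rewrite (pos_inj pz px).
by apply/negbTE/negP => /(pos_cover ne_xy); rewrite px py.
Qed.

Lemma cover_label_twin : label_twin cover_label.
Proof.
move=> a a' b b' ea eb ne_l.
have ne_ab : a != b by apply: contraNneq ne_l => ->.
have ne_ab' : a' != b' by apply: contraNneq ne_l => eq_ab'; rewrite ea eb eq_ab'.
by rewrite !cover_label_arcE // ea eb.
Qed.

Lemma cover_label_indep : label_indep cover_label.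
Proof.
move=> a b [pab _ _] ne_ab; case pa: (pos a) => [p|] in pab.
  by rewrite (pos_inj pa (esym pab)) eqxx in ne_ab.
by apply/negP => /(pos_cover ne_ab); rewrite pa -pab.
Qed.

End CoverLabel.

Lemma Kn_free_labelling n E : 0 < n -> ~ shi_le (Kn n) E ->
  exists l : 'I_(fd_n E) -> cover_label_type (n * n).*2,
    label_twin l /\ label_indep l.
Proof.
move=> n_gt0 Kn_free; have [C [le_C cover]] := Kn_free_cover n_gt0 Kn_free.
have [pos [posC pos_inj]] := set_code_of_card le_C.
have pos_cover x y : x != y -> fd_E E x y -> (pos x != None) || (pos y != None).
  by rewrite !posC; apply: cover.
by exists (cover_label pos); split; [apply: cover_label_twin | apply: cover_label_indep].
Qed.

Lemma Kn_free_good_pair n (s : nat -> fdigraph) : 0 < n ->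
  (forall i, reflexive_dg (s i) /\ ~ shi_le (Kn n) (s i)) ->
  exists i j, i < j /\ shi_le (s i) (s j).
Proof.
move=> n_gt0 s_Kn_free.
have labelled i : exists p, exists l : 'I_(fd_n (s i)) -> cover_label_type (n * n).*2,
    [/\ label_twin l, label_indep l & label_profile l = p].
  have [l [twin_l indep_l]] := Kn_free_labelling n_gt0 (s_Kn_free i).2.
  by exists (label_profile l), l.
pose prof i := proj1_sig (constructive_indefinite_description _ (labelled i)).
have prof_spec i := proj2_sig (constructive_indefinite_description _ (labelled i)).
have [i [j [lt_ij le_ij]]] :=
  chain_extractable_good_pair prof (@chain_extractable_profile_le _ _).
exists i, j; split => //.
have [li [twin_i indep_i prof_i]] := prof_spec i.
have [lj [twin_j indep_j prof_j]] := prof_spec j.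
apply: shi_le_of_profile (s_Kn_free i).1 (s_Kn_free j).1 twin_i indep_i twin_j indep_j _.
by rewrite prof_i prof_j.
Qed.

Theorem theorem4p7 (D : fdigraph) (hD : reflexive_dg D) :
  wqo_shi (Av D) <-> exists n, (1 <= n)%N /\ dg_iso D (Kn n).
Proof.
split=> [[_ no_antichain] | [n [n_gt0 iso_D]]].
  apply: NNPP => not_Kn; apply: no_antichain.
  exists (fun i => Kminus_matching (~~ dg_symmetric D) i.+1); split.
    by move=> i; split; [apply: Kminus_matching_refl | apply: Kminus_matching_avoid].
  by move=> i j /eqP ne_ij; apply: Kminus_matching_antichain.
split; first by case=> s [_]; apply: no_shi_descending_chain.
case=> s [s_Av antichain].
have s_Kn_free i : reflexive_dg (s i) /\ ~ shi_le (Kn n) (s i).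
  by case: (s_Av i) => refl_s D_free; split => // le_Kn_s;
     apply/D_free/(shi_le_trans (dg_iso_shi_le iso_D)).
have [i [j [lt_ij le_ij]]] := Kn_free_good_pair n_gt0 s_Kn_free.
by apply: (antichain i j) le_ij => eq_ij; rewrite eq_ij ltnn in lt_ij.
Qed.
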